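(* In the transactional panorama model with the lenses and metrics described in the context, $S(\mathrm{LCMB}) \le S(\mathrm{LCNB})$ and $S(\mathrm{ICNB}) \le S(\mathrm{LCNB})$, while the order between $S(\mathrm{LCMB})$ and $S(\mathrm{ICNB})$ depends on the workload (neither inequality between them holds for all workloads).
   Context: A view graph is a DAG on a set $N$ of nodes (source data and views). Write transactions are processed one at a time; write transaction $w^{t_i}$ creates version $G^{t_i}$ with state set $V^{t_i}$ containing, for each node $n_k$, either its computed new result $v_k^{t_i}$, a placeholder $UC_k^{t_i}$ if $w^{t_i}$ updates $n_k$ but has not yet computed it, or its result from the previous version if $n_k$ is not updated. A version is committed once all its new results are computed; at any time there is the committed graph (most recently committed version, no UCs) and the latest graph (version of the most recent write transaction). Read transactions $r^{s_1},\dots,r^{s_m}$ each read the views in the current viewport and return immediately a set $H^{s_i}$ of states (results or UCs); $Time(r^{s_i})$ is its return time. A returned state's timestamp is that of its version. Lenses: LCNB returns the viewport states from the more recent of the committed and latest graphs that has zero UCs for the viewport. LCMB: if reading either the committed or the latest graph preserves monotonicity (no view gets a state with smaller timestamp than previously read), behave like LCNB; otherwise read the latest graph. ICNB returns, for each view independently, its most recently computed result. Staleness for $R=\{r^{s_1},\dots,r^{s_m}\}$: $S(R)=\sum_{i=1}^{m-1}\sum_{v_k^{t_j}\in H^{s_i}_{qr}}\mathbf{1}[v_k^{t_j}\notin V^{t_i}]\,(Time(r^{s_{i+1}})-Time(r^{s_i}))$ where $H^{s_i}_{qr}$ is the set of view results (non-UC states) in $H^{s_i}$ and $G^{t_i}$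 is the latest version before $r^{s_i}$ starts. $S(A)$ denotes staleness under lens $A$; lenses are compared on the same write transactions, the same order of computing new view results, and the same sequence of read transactions. A workload consists of the view graph, viewports, and read/write transactions. *)

From mathcomp Require Import all_boot all_order all_algebra.
Set Implicit Arguments. Unset Strict Implicit. Unset Printing Implicit Defensive.
Import Order.TTheory GRing.Theory Num.Theory.

Section Model.
Variables (N : finType) (R : realFieldType).

(* An execution is a trace of events, in the order they happen.
   - [EWrite U]     : a write transaction arrives, creating the next version
                      (version indices 1,2,...; version 0 is the initial
                      graph, all of whose states are computed results);
                      U is the set of nodes it updates.
   - [ECompute j k] : the new result v_k^{t_j} of node k for version j is computed.
   - [ERead vp t]   : a read transaction reading the viewport vp; it returns
                      immediately, at time t (Time(r)). *)
Inductive event :=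
  | EWrite of {set N}
  | ECompute of nat & N
  | ERead of {set N} & R.

Definition ev0 : event := EWrite set0.

Definition writes (pre : seq event) : seq {set N} :=
  pmap (fun ev => if ev is EWrite U then Some U else None) pre.

Definition nver (pre : seq event) : nat := size (writes pre).

Definition upd (pre : seq event) (j : nat) (k : N) : bool :=
  (0 < j <= nver pre) && (k \in nth set0 (writes pre) j.-1).

Definition computed (pre : seq event) (j : nat) (k : N) : bool :=
  has (fun ev => if ev is ECompute j' k' then (j' == j) && (k' == k) else false) pre.

(* version whose state node k carries in version i: last version <= i updating k *)
Definition last_upd (pre : seq event) (i : nat) (k : N) : nat :=
  \max_(j < i.+1 | upd pre j k) j.

(* A state of node k: (timestamp j, b), where b = true means the result
   v_k^{t_j} and b = false means the placeholder UC_k^{t_j}. *)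
Definition state (pre : seq event) (i : nat) (k : N) : nat * bool :=
  let j := last_upd pre i k in (j, (j == 0%N) || computed pre j k).

Definition complete (pre : seq event) (j : nat) : bool :=
  [forall k, upd pre j k ==> computed pre j k].

(* committed graph: the most recent version that is committed, versions
   being committed in order *)
Definition committed (pre : seq event) : nat :=
  \max_(i < (nver pre).+1 | [forall j : 'I_i.+1, complete pre j]) i.

Definition no_uc (pre : seq event) (g : nat) (vp : {set N}) : bool :=
  [forall k in vp, (state pre g k).2].

Inductive lens := LCNB | LCMB | ICNB.

Definition lcnb_graph (pre : seq event) (vp : {set N}) : nat :=
  if no_uc pre (nver pre) vp then nver pre else committed pre.

(* most recently computed result of k (0 = initial result) *)
Definition last_comp (pre : seq event) (k : N) : nat :=
  foldl (fun acc ev => if ev is ECompute j k' then (if k' == k then j else acc) else acc)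
        0%N pre.

(* history: largest timestamp previously read for each view *)
Definition monotone (hist : N -> nat) (pre : seq event) (g : nat) (vp : {set N}) : bool :=
  [forall k in vp, hist k <= (state pre g k).1].

(* returned states (one per node; only those in vp matter) *)
Definition read (L : lens) (hist : N -> nat) (pre : seq event) (vp : {set N})
  : N -> nat * bool :=
  match L with
  | LCNB => state pre (lcnb_graph pre vp)
  | LCMB => let g := lcnb_graph pre vp in
            if monotone hist pre g vp then state pre g else state pre (nver pre)
  | ICNB => fun k => (last_comp pre k, true)
  end.

Definition upd_hist (hist : N -> nat) (vp : {set N}) (H : N -> nat * bool) : N -> nat :=
  fun k => if k \in vp then maxn (hist k) (H k).1 else hist k.

Definition nstale (pre : seq event) (vp : {set N}) (H : N -> nat * bool) : nat :=
  #|[set k in vp | (H k).2 && (H k != state pre (nver pre) k)]|.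

Fixpoint run_aux (L : lens) (hist : N -> nat) (pre rest : seq event) : seq (R * nat) :=
  match rest with
  | [::] => [::]
  | ev :: rest' =>
      match ev with
      | ERead vp t =>
          let H := read L hist pre vp in
          (t, nstale pre vp H) :: run_aux L (upd_hist hist vp H) (rcons pre ev) rest'
      | _ => run_aux L hist (rcons pre ev) rest'
      end
  end.

Definition run (L : lens) (tr : seq event) : seq (R * nat) :=
  run_aux L (fun _ => 0%N) [::] tr.

Fixpoint stale_sum (l : seq (R * nat)) : R :=
  match l with
  | (t, c) :: ((t', _) :: _) as rest => (c%:R * (t' - t) + stale_sum rest)%R
  | _ => 0%R
  end.

Definition acyclic (e : rel N) : Prop := forall x y, e x y -> ~~ connect e y x.

Definition is_view (e : rel N) (k : N) : bool := [exists p, e p k].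

Definition read_times (tr : seq event) : seq R :=
  pmap (fun ev => if ev is ERead _ t then Some t else None) tr.

Definition valid_trace (e : rel N) (tr : seq event) : Prop :=
  (forall p, p < size tr ->
     match nth ev0 tr p with
     | ECompute j k =>
         let pre := take p tr in
         [&& 0 < j <= nver pre, upd pre j k, ~~ computed pre j k
           & [forall j' : 'I_j, complete pre j']]  (* one write at a time *)
     | ERead vp _ => vp \subset [pred k | is_view e k]
     | EWrite _ => true
     end)
  /\ sorted <=%R (read_times tr).

End Model.

Record workload (R : realFieldType) := Workload {
  wl_node : finType;
  wl_edge : rel wl_node;
  wl_trace : seq (event wl_node R) }.

Definition valid_workload (R : realFieldType) (w : workload R) : Prop :=
  @acyclic (wl_node w) (@wl_edge R w) /\
  @valid_trace (wl_node w) R (@wl_edge R w) (@wl_trace R w).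

Definition S (R : realFieldType) (L : lens) (w : workload R) : R :=
  @stale_sum R (@run (wl_node w) R L (@wl_trace R w)).

From mathcomp Require Import all_boot all_order all_algebra.
Import Order.TTheory GRing.Theory Num.Theory.
Set Implicit Arguments. Unset Strict Implicit. Unset Printing Implicit Defensive.

(* Both upper bounds hold read by read, and staleness is a combination of the
   per-read counts with the nonnegative gaps between the sorted read times.
   LCMB departs from LCNB only by reading the latest graph, whose results are
   never stale. ICNB returns the most recently computed result of each view;
   since versions are computed in order, this is the latest state whenever
   that state is a result, and when it is a UC, LCNB reads the committed graph,
   which has no UC, so LCNB returns a stale result for that view as well.
   For incomparability, one write updates two views and only the first is
   recomputed. Reading both views, LCMB gets the committed graph (two stale
   results) and ICNB one stale result. After a read of the first view alone,
   monotonicity pushes LCMB to the latest graph (the UC is not counted), while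
   ICNB still returns the old result of the second view. *)

Lemma bigmax_natP (I : finType) (P : pred I) (F : I -> nat) :
  \max_(i | P i) F i = 0 \/ exists2 i, P i & \max_(i | P i) F i = F i.
Proof.
case: (posnP #|P|) => [/card0_eq P0 | P_gt0]; first by left; rewrite big_pred0.
by have [i Pi ->] := eq_bigmax_cond F P_gt0; right; exists i.
Qed.

Section Traces.
Variables (N : finType) (R : realFieldType).
Implicit Types (pre : seq (event N R)) (ev : event N R).

Lemma writes_rcons pre ev :
  writes (rcons pre ev) = writes pre ++ (if ev is EWrite U then [:: U] else [::]).
Proof. by rewrite /writes -cats1 pmap_cat; case: ev. Qed.

Lemma upd_rcons pre ev j k : j <= nver pre -> upd (rcons pre ev) j k = upd pre j k.
Proof.
rewrite /upd /nver writes_rcons size_cat nth_cat; case: j => [|j] //= lej.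
by rewrite lej (leq_trans lej (leq_addr _ _)).
Qed.

Lemma upd_le_nver pre j k : upd pre j k -> 0 < j <= nver pre.
Proof. by case/andP. Qed.

Lemma computed_rcons pre ev j k : computed (rcons pre ev) j k =
  (if ev is ECompute j' k' then (j' == j) && (k' == k) else false) || computed pre j k.
Proof. by rewrite /computed has_rcons. Qed.

Lemma complete_rcons pre ev j :
  j <= nver pre -> complete pre j -> complete (rcons pre ev) j.
Proof.
move=> lej /forallP cj; apply/forallP => k; rewrite upd_rcons //.
by apply/implyP => /(implyP (cj k)) ck; rewrite computed_rcons ck orbT.
Qed.

Lemma last_comp_rcons pre ev k : last_comp (rcons pre ev) k =
  if ev is ECompute j k' then (if k' == k then j else last_comp pre k) else last_comp pre k.
Proof. by rewrite /last_comp foldl_rcons; case: ev. Qed.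

Lemma computed_last_comp pre k : last_comp pre k != 0 -> computed pre (last_comp pre k) k.
Proof.
elim/last_ind: pre => [//|pre ev IH].
rewrite last_comp_rcons computed_rcons; case: ev => [U|j k'|vp t] /=; try exact: IH.
case: (eqVneq k' k) => _; first by rewrite eqxx.
by move/IH->; rewrite orbT.
Qed.

Lemma leq_last_upd pre i j k : j <= i -> upd pre j k -> j <= last_upd pre i k.
Proof.
move=> le_ji u_jk; rewrite /last_upd.
exact: (@leq_bigmax_cond _ (fun j' : 'I_i.+1 => upd pre j' k) (@nat_of_ord _)
          (Ordinal (le_ji : j < i.+1))).
Qed.

Lemma last_updP pre i k :
  last_upd pre i k = 0 \/ upd pre (last_upd pre i k) k /\ last_upd pre i k <= i.
Proof.
rewrite /last_upd.
case: (bigmax_natP (fun j : 'I_i.+1 => upd pre j k) (@nat_of_ord _)) => [->|[j u_jk ->]].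
  by left.
by right; split; last rewrite -ltnS.
Qed.

Lemma committed_le_nver pre : committed pre <= nver pre.
Proof. by apply/bigmax_leqP => i _; rewrite -ltnS. Qed.

Lemma committed_complete pre j : j <= committed pre -> complete pre j.
Proof.
rewrite /committed.
case: (bigmax_natP (fun i : 'I_(nver pre).+1 => [forall j : 'I_i.+1, complete pre j])
  (@nat_of_ord _)) => [-> /[!leqn0] /eqP-> | [i /forallP comp_i ->] le_ji].
  by apply/forallP.
exact: (comp_i (Ordinal (le_ji : j < i.+1))).
Qed.

Lemma committed_result pre k : (state pre (committed pre) k).2.
Proof.
rewrite /state /=; case: (last_updP pre (committed pre) k) => [->//|[u_k le_c]].
by have /forallP/(_ k)/implyP := committed_complete le_c; move/(_ u_k)->; rewrite orbT.
Qed.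

Lemma nstale_latest pre vp : nstale pre vp (state pre (nver pre)) = 0.
Proof.
rewrite /nstale (_ : [set _ in vp | _] = set0) ?cards0 //.
by apply/setP => k; rewrite !inE eqxx !andbF.
Qed.

Definition valid_step pre ev : bool :=
  if ev is ECompute j k then
    [&& 0 < j <= nver pre, upd pre j k, ~~ computed pre j k
      & [forall j' : 'I_j, complete pre j']]
  else true.

(* The last clause holds because versions are computed one write at a time. *)
Definition consistent pre : Prop := forall j k, computed pre j k ->
  [/\ upd pre j k, forall j', j' < j -> complete pre j' & j <= last_comp pre k].

Lemma consistent_rcons pre ev : consistent pre -> valid_step pre ev -> consistent (rcons pre ev).
Proof.
move=> cons_pre step j k; rewrite computed_rcons.
case c_jk: (computed pre j k); [move=> _ | rewrite orbF].
  have [u_jk comp_lt le_lc] := cons_pre j k c_jk.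
  have /andP[_ le_j] := upd_le_nver u_jk.
  split; first by rewrite upd_rcons.
    move=> j' lt_j'; apply: complete_rcons (comp_lt j' lt_j').
    exact: leq_trans (ltnW lt_j') le_j.
  rewrite last_comp_rcons; case: ev step => // j0 k0 /and4P[_ u0 nc0 _].
  case: (eqVneq k0 k) => [e|//]; subst k0; rewrite leqNgt; apply: contra nc0 => lt_j.
  by have /forallP/(_ k)/implyP := comp_lt _ lt_j; apply.
case: ev step => // j0 k0 /and4P[_ u0 _ /forallP comp0] /andP[/eqP<- /eqP<-].
have /andP[_ le_j0] := upd_le_nver u0.
split; first by rewrite upd_rcons.
  move=> j' lt_j'; apply: complete_rcons (comp0 (Ordinal lt_j')).
  exact: leq_trans (ltnW lt_j') le_j0.
by rewrite last_comp_rcons eqxx.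
Qed.

Lemma consistent_take tr :
  (forall p, p < size tr -> valid_step (take p tr) (nth (ev0 N R) tr p)) ->
  forall n, consistent (take n tr).
Proof.
move=> valid; elim=> [|n IH]; first by rewrite take0.
case: (ltnP n (size tr)) => [lt_n|le_n].
  by rewrite (take_nth (ev0 N R) lt_n); apply: consistent_rcons IH (valid n lt_n).
by rewrite take_oversize ?(leq_trans le_n) // -(take_oversize le_n).
Qed.

Lemma last_comp_latest pre k : consistent pre -> (state pre (nver pre) k).2 ->
  last_comp pre k = last_upd pre (nver pre) k.
Proof.
move=> cons_pre /orP res; apply/eqP; rewrite eqn_leq; apply/andP; split.
  have [->//|/computed_last_comp c_k] := eqVneq (last_comp pre k) 0.
  have [u_k _ _] := cons_pre _ _ c_k.
  by have /andP[_ le_k] := upd_le_nver u_k; apply: leq_last_upd le_k u_k.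
by case: res => [/eqP->//|/cons_pre[]].
Qed.

Lemma nstale_LCMB_le_LCNB pre vp h h' :
  nstale pre vp (read LCMB h pre vp) <= nstale pre vp (read LCNB h' pre vp).
Proof. by rewrite /=; case: ifP => _; rewrite ?nstale_latest. Qed.

Lemma nstale_ICNB_le_LCNB pre vp h h' : consistent pre ->
  nstale pre vp (read ICNB h pre vp) <= nstale pre vp (read LCNB h' pre vp).
Proof.
move=> cons_pre; apply/subset_leq_card/subsetP => k.
rewrite !inE => /andP[k_vp /andP[_ stale_k]]; rewrite k_vp andTb.
case res_k: (state pre (nver pre) k).2.
  by move: stale_k; rewrite /= (last_comp_latest cons_pre res_k) /state /= -res_k eqxx.
rewrite /= /lcnb_graph ifF; last by apply: contraFF res_k => /forall_inP; apply.
apply/andP; split; first exact: committed_result.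
by apply: contraFN res_k => /eqP <-; apply: committed_result.
Qed.

Lemma map_fst_run_aux L h pre rest : map fst (run_aux L h pre rest) = read_times rest.
Proof. by elim: rest h pre => [|[U|j k|vp t] rest IH] h pre //=; rewrite IH. Qed.

Lemma run_aux_counts_le tr L1 L2 (P : seq (event N R) -> Prop) :
  (forall n, P (take n tr)) ->
  (forall pre vp h1 h2, P pre ->
     nstale pre vp (read L1 h1 pre vp) <= nstale pre vp (read L2 h2 pre vp)) ->
  forall pre rest h1 h2, pre ++ rest = tr ->
  all2 leq (map snd (run_aux L1 h1 pre rest)) (map snd (run_aux L2 h2 pre rest)).
Proof.
move=> P_take le_read pre rest; elim: rest pre => [//|ev rest IH] pre h1 h2 def_tr.
have def_tr' : rcons pre ev ++ rest = tr by rewrite cat_rcons.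
case: ev def_tr def_tr' => [U|j k|vp t] def_tr def_tr' /=; try exact: IH.
rewrite le_read ?IH //; move: (P_take (size pre)).
by rewrite -def_tr take_size_cat.
Qed.

Lemma stale_sum_le (l1 l2 : seq (R * nat)) :
  map fst l1 = map fst l2 -> sorted <=%R (map fst l1) ->
  all2 leq (map snd l1) (map snd l2) -> (stale_sum l1 <= stale_sum l2)%R.
Proof.
elim: l1 l2 => [|[t c] l1 IH] [|[t' d] l2] //= [<- times] sorted_t /andP[le_cd le_12].
have {le_12}IH := IH _ times (path_sorted sorted_t) le_12.
case: l1 l2 times sorted_t IH => [|[u c'] l1] [|[u' d'] l2] //= [<- _] /andP[le_tu _] IH.
by rewrite lerD // ler_wpM2r ?subr_ge0 ?ler_nat.
Qed.

Lemma stale_sum_run_le tr L1 L2 (P : seq (event N R) -> Prop) :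
  (forall n, P (take n tr)) ->
  (forall pre vp h1 h2, P pre ->
     nstale pre vp (read L1 h1 pre vp) <= nstale pre vp (read L2 h2 pre vp)) ->
  sorted <=%R (read_times tr) ->
  (stale_sum (run L1 tr) <= stale_sum (run L2 tr))%R.
Proof.
move=> P_take le_read sorted_t.
apply: stale_sum_le; rewrite ?map_fst_run_aux //.
exact: (run_aux_counts_le P_take le_read).
Qed.
End Traces.

Lemma S_LCMB_le_LCNB (R : realFieldType) (w : workload R) :
  valid_workload w -> (S LCMB w <= S LCNB w)%R.
Proof.
case: w => N e tr [_ [_ sorted_t]]; rewrite /S /=.
by apply: (stale_sum_run_le (P := fun _ => True)) => // *; apply: nstale_LCMB_le_LCNB.
Qed.

Lemma S_ICNB_le_LCNB (R : realFieldType) (w : workload R) :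
  valid_workload w -> (S ICNB w <= S LCNB w)%R.
Proof.
case: w => N e tr [_ [valid sorted_t]]; rewrite /S /=.
apply: (stale_sum_run_le (P := @consistent N R)) => //.
  by apply: consistent_take => p /valid; case: nth.
by move=> *; apply: nstale_ICNB_le_LCNB.
Qed.

Section Counterexamples.
Variable R : realFieldType.
Local Open Scope ring_scope.

Definition n0 : 'I_3 := ord0.
Definition n1 : 'I_3 := inord 1.
Definition n2 : 'I_3 := inord 2.
Definition views : {set 'I_3} := [set n1; n2].
Definition edge_ex : rel 'I_3 := fun x y => (x == n0) && (y != n0).

Lemma n1_neq_n2 : n1 != n2. Proof. by rewrite -val_eqE /= !inordK. Qed.

Lemma acyclic_edge_ex : acyclic edge_ex.
Proof.
move=> x y /andP[/eqP-> y_n0]; apply/negP => /connectP[[|z p] /=].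
  by move=> _ n0_y; rewrite n0_y eqxx in y_n0.
by case/andP=> /andP[/eqP y_0 _]; rewrite y_0 eqxx in y_n0.
Qed.

Section AfterFirstCompute.
Variable pre : seq (event 'I_3 R).
Hypothesis writes_pre : writes pre = [:: views].
Hypothesis computed_pre : forall j k, computed pre j k = (j == 1)%N && (k == n1).
Hypothesis last_comp_pre : forall k, last_comp pre k = (k == n1).

Lemma nver_pre : nver pre = 1%N. Proof. by rewrite /nver writes_pre. Qed.

Lemma upd_pre j k : upd pre j k = (j == 1)%N && (k \in views).
Proof. by rewrite /upd nver_pre writes_pre; case: j => [|[|j]]. Qed.

Lemma state0_pre k : state pre 0 k = (0%N, true).
Proof. by rewrite /state; case: (last_updP pre 0 k) => [->|[_ /[!leqn0] /eqP->]]. Qed.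

Lemma last_upd1_pre k : k \in views -> last_upd pre 1 k = 1%N.
Proof.
move=> k_views; apply/anti_leq/andP; split.
  by case: (last_updP pre 1 k) => [->|[]].
by apply: leq_last_upd; rewrite // upd_pre k_views.
Qed.

Lemma state1_pre_n1 : state pre 1 n1 = (1%N, true).
Proof. by rewrite /state last_upd1_pre ?computed_pre ?eqxx // !inE eqxx. Qed.

Lemma state1_pre_n2 : state pre 1 n2 = (1%N, false).
Proof.
have n2_views : n2 \in views by rewrite !inE eqxx orbT.
by rewrite /state last_upd1_pre // computed_pre [n2 == _]eq_sym (negbTE n1_neq_n2) andbF.
Qed.

Lemma committed_pre : committed pre = 0%N.
Proof.
have := committed_le_nver pre; rewrite nver_pre leq_eqVlt ltnS leqn0 => /orP[/eqP c1|/eqP//].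
have /forallP/(_ n2) : complete pre 1 by apply: committed_complete; rewrite c1.
by rewrite upd_pre computed_pre [n2 == _]eq_sym (negbTE n1_neq_n2) !inE !eqxx orbT andbF.
Qed.

Lemma lcnb_graph_views : lcnb_graph pre views = 0%N.
Proof.
rewrite /lcnb_graph committed_pre ifF //; apply: negbTE; apply/forall_inP.
by move=> /(_ n2); rewrite !inE eqxx orbT nver_pre state1_pre_n2 => /(_ isT).
Qed.

Lemma read_LCMB_n1 h : read LCMB h pre [set n1] = state pre (nver pre).
Proof.
rewrite /=; have -> : lcnb_graph pre [set n1] = nver pre.
  by rewrite /lcnb_graph ifT //; apply/forall_inP => k /set1P->; rewrite nver_pre state1_pre_n1.
by case: ifP.
Qed.

Lemma read_LCMB_views h : h n1 = 1%N -> read LCMB h pre views = state pre (nver pre).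
Proof.
move=> h_n1; rewrite /= lcnb_graph_views ifF //; apply: negbTE; apply/forall_inP.
by move=> /(_ n1); rewrite !inE eqxx h_n1 state0_pre => /(_ isT).
Qed.

Lemma nstale_LCMB_views : nstale pre views (read LCMB (fun _ => 0%N) pre views) = 2%N.
Proof.
rewrite /= lcnb_graph_views ifT; last by apply/forall_inP.
rewrite /nstale (_ : [set _ in views | _] = views) ?cards2 ?n1_neq_n2 //; apply/setP => k.
rewrite inE state0_pre; case: (boolP (k \in views)) => //= k_views.
by rewrite nver_pre /state last_upd1_pre.
Qed.

Lemma nstale_ICNB h vp : nstale pre vp (read ICNB h pre vp) = (n2 \in vp).
Proof.
have stale_k k : (read ICNB h pre vp k).2 && (read ICNB h pre vp k != state pre (nver pre) k)
                 = (k == n2).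
  rewrite /= last_comp_pre nver_pre.
  have [->|k_n1] := eqVneq k n1; first by rewrite state1_pre_n1 eqxx (negbTE n1_neq_n2).
  have [->|k_n2] := eqVneq k n2; first by rewrite state1_pre_n2.
  have k_out : k \notin views by rewrite !inE negb_or k_n1.
  rewrite /state; case: (last_updP pre 1 k) => [->|[]]; first by rewrite eqxx.
  by rewrite upd_pre (negbTE k_out) andbF.
rewrite /nstale (_ : [set k in vp | _] = [set k in vp | k == n2]); last first.
  by apply/setP => k; rewrite !inE stale_k.
have [n2_vp|n2_vp] := boolP (n2 \in vp).
  rewrite (_ : [set _ in vp | _] = [set n2]) ?cards1 //.
  by apply/setP => k; rewrite !inE andbC; case: eqP => // ->.
rewrite (_ : [set _ in vp | _] = set0) ?cards0 //.
by apply/setP => k; rewrite !inE andbC; case: eqP => // ->; rewrite (negbTE n2_vp).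
Qed.
End AfterFirstCompute.

Definition pre_ex : seq (event 'I_3 R) := [:: EWrite R views; ECompute R 1 n1].
Definition pre_ex_read : seq (event 'I_3 R) := rcons pre_ex (ERead [set n1] 0).

Lemma writes_pre_ex : writes pre_ex = [:: views]. Proof. by []. Qed.

Lemma computed_pre_ex j k : computed pre_ex j k = (j == 1)%N && (k == n1).
Proof. by rewrite /computed /= orbF eq_sym [n1 == _]eq_sym. Qed.

Lemma last_comp_pre_ex k : last_comp pre_ex k = (k == n1).
Proof. by rewrite /last_comp /= eq_sym; case: eqP. Qed.

Lemma writes_pre_ex_read : writes pre_ex_read = [:: views].
Proof. by rewrite writes_rcons cats0. Qed.

Lemma computed_pre_ex_read j k : computed pre_ex_read j k = (j == 1)%N && (k == n1).
Proof. by rewrite computed_rcons computed_pre_ex. Qed.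

Lemma last_comp_pre_ex_read k : last_comp pre_ex_read k = (k == n1).
Proof. by rewrite last_comp_rcons last_comp_pre_ex. Qed.

Definition workload1 : workload R :=
  Workload edge_ex [:: EWrite R views; ECompute R 1 n1; ERead views 0; ERead views 1].

Definition workload2 : workload R :=
  Workload edge_ex [:: EWrite R views; ECompute R 1 n1;
                       ERead [set n1] 0; ERead views 1; ERead [set n1] 2%:R].

Lemma S_workload1 L :
  S L workload1 = (nstale pre_ex views (read L (fun _ => 0%N) pre_ex views))%:R.
Proof. by rewrite /S /= subr0 mulr1 addr0. Qed.

Lemma S_workload2 L : let H := read L (fun _ => 0%N) pre_ex [set n1] in
  S L workload2 = (nstale pre_ex [set n1] H)%:R
    + (nstale pre_ex_read views
         (read L (upd_hist (fun _ => 0%N) [set n1] H) pre_ex_read views))%:R.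
Proof. by rewrite /S /= subr0 mulr1 addr0 mulr2n addrK mulr1. Qed.

Lemma S_workload1_LCMB : S LCMB workload1 = 2%:R.
Proof. by rewrite S_workload1 (nstale_LCMB_views writes_pre_ex computed_pre_ex). Qed.

Lemma S_workload1_ICNB : S ICNB workload1 = 1.
Proof.
rewrite S_workload1 (nstale_ICNB writes_pre_ex computed_pre_ex last_comp_pre_ex).
by rewrite !inE eqxx orbT.
Qed.

Lemma S_workload2_LCMB : S LCMB workload2 = 0.
Proof.
have hist_n1 : upd_hist (fun _ => 0%N) [set n1] (state pre_ex (nver pre_ex)) n1 = 1%N.
  rewrite /upd_hist inE eqxx (nver_pre writes_pre_ex).
  by rewrite (state1_pre_n1 writes_pre_ex computed_pre_ex).
rewrite S_workload2 (read_LCMB_n1 writes_pre_ex computed_pre_ex).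
rewrite (read_LCMB_views writes_pre_ex_read computed_pre_ex_read) ?hist_n1 //.
by rewrite !nstale_latest addr0.
Qed.

Lemma S_workload2_ICNB : S ICNB workload2 = 1.
Proof.
rewrite S_workload2 (nstale_ICNB writes_pre_ex computed_pre_ex last_comp_pre_ex).
rewrite (nstale_ICNB writes_pre_ex_read computed_pre_ex_read last_comp_pre_ex_read).
by rewrite !inE eqxx orbT eq_sym (negbTE n1_neq_n2) add0r.
Qed.

Lemma subset_views_is_view (vp : {set 'I_3}) :
  vp \subset views -> vp \subset [pred k | is_view edge_ex k].
Proof.
move=> /subsetP vp_views; apply/subsetP => k /vp_views k_views; apply/existsP; exists n0.
by move: k_views; rewrite !inE /edge_ex eqxx => /orP[]/eqP->; rewrite -val_eqE /= inordK.
Qed.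

Lemma valid_step_compute_n1 : valid_step [:: EWrite R views] (ECompute R 1 n1).
Proof.
apply/and4P; split=> //; first by rewrite /upd /= !inE eqxx.
by apply/forallP => -[[|//] ?]; apply/forallP.
Qed.

Lemma valid_workload1 : valid_workload workload1.
Proof.
split; first exact: acyclic_edge_ex.
split; last by rewrite /read_times /= ler01.
case=> [|[|[|[|//]]]] _ //=; [exact: valid_step_compute_n1 | exact: subset_views_is_view..].
Qed.

Lemma valid_workload2 : valid_workload workload2.
Proof.
have n1_views : [set n1] \subset views by rewrite sub1set !inE eqxx.
split; first exact: acyclic_edge_ex.
split; last by rewrite /read_times /= ler01 ler1n.
case=> [|[|[|[|[|//]]]]] _ //=; [exact: valid_step_compute_n1 | exact: subset_views_is_view..].
Qed.
End Counterexamples.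

Local Open Scope ring_scope.

Theorem theorem2p9 (R : realFieldType) :
  (forall w : workload R, valid_workload w ->
     S LCMB w <= S LCNB w /\ S ICNB w <= S LCNB w)
  /\ ~ (forall w : workload R, valid_workload w -> S LCMB w <= S ICNB w)
  /\ ~ (forall w : workload R, valid_workload w -> S ICNB w <= S LCMB w).
Proof.
split; first by move=> w valid_w; split; [apply: S_LCMB_le_LCNB | apply: S_ICNB_le_LCNB].
split=> [LCMB_le_ICNB | ICNB_le_LCMB].
  have := LCMB_le_ICNB _ (valid_workload1 R).
  by rewrite S_workload1_LCMB S_workload1_ICNB lern1.
have := ICNB_le_LCMB _ (valid_workload2 R).
by rewrite S_workload2_LCMB S_workload2_ICNB ler10.
Qed.
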